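(* Let $t\ge 2$ be an integer and let $G_1,G_2,\dots,G_t$ be cyclically orderable graphs, each with at least two vertices, with $d(G_1)=d(G_2)=\cdots=d(G_t)$. Then any series composition $G_1\oplus G_2\oplus\cdots\oplus G_t$ is cyclically orderable.
   Context: The density of a connected graph $G$ with at least two vertices is $d(G)=\frac{|E(G)|}{|V(G)|-1}$. A cyclic base ordering (CBO) of a connected graph $G$ is a bijection $\mathcal{O}:E(G)\to\{1,\dots,|E(G)|\}$ such that for every $i\in\{1,\dots,|E(G)|\}$ the edges $\mathcal{O}^{-1}(i),\dots,\mathcal{O}^{-1}(i+|V(G)|-2)$ (indices taken cyclically modulo $|E(G)|$) induce a spanning tree of $G$; $G$ is cyclically orderable if it has a CBO. Given graphs $G$ and $H$ (vertex-disjoint) with $u\in V(G)$ and $v\in V(H)$, the series composition $G\oplus H$ is obtained from the disjoint union of $G$ and $H$ by identifying $u$ and $v$ into a single vertex. $G_1\oplus\cdots\oplus G_t$ denotes an iterated series composition $(\cdots(G_1\oplus G_2)\oplus\cdots)\oplus G_t$ with arbitrary choices of glued vertices at each step. *)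

From HB Require Import structures.
From mathcomp Require Import all_boot all_order all_algebra.
Set Implicit Arguments. Unset Strict Implicit. Unset Printing Implicit Defensive.

Record sgraph := SGraph {
  vert : finType;
  edges : {set {set vert}};
  edges2 : [forall e in edges, #|e| == 2]
}.

Definition adjF (V : finType) (F : {set {set V}}) : rel V :=
  fun x y => [set x; y] \in F.

Definition connectedF (V : finType) (F : {set {set V}}) : Prop :=
  forall x y : V, connect (adjF F) x y.

Definition connected_graph (G : sgraph) : Prop := connectedF (edges G).

Definition spanning_tree (G : sgraph) (F : {set {set vert G}}) : Prop :=
  F \subset edges G /\ connectedF F /\
  forall e, e \in F -> ~ connectedF (F :\ e).

Arguments spanning_tree : clear implicits.

Definition density (G : sgraph) : rat :=
  (#|edges G|%:R / (#|vert G| - 1)%:R)%R.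

Definition window (G : sgraph) (s : seq {set vert G}) (i : nat)
  : {set {set vert G}} :=
  [set nth set0 s ((i + val k) %% size s) | k : 'I_(#|vert G| - 1)].

Arguments window : clear implicits.

(* A cyclic base ordering, given as the sequence O^{-1}(1), ..., O^{-1}(|E|):
   a duplicate-free enumeration of all edges, every cyclic window of
   |V|-1 consecutive edges inducing a spanning tree. *)
Definition is_CBO (G : sgraph) (s : seq {set vert G}) : Prop :=
  perm_eq s (enum (edges G)) /\
  forall i, i < size s -> spanning_tree G (window G s i).

Arguments is_CBO : clear implicits.

Definition cyclically_orderable (G : sgraph) : Prop :=
  connected_graph G /\ exists s, is_CBO G s.

(* K is (isomorphic to) the series composition of G and H obtained by
   identifying u in V(G) with v in V(H), for some choice of u and v. *)
Definition series_comp (G H K : sgraph) : Prop :=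
  exists (u : vert G) (v : vert H) (f : vert G -> vert K) (g : vert H -> vert K),
    [/\ injective f, injective g, f u = g v &
        (forall x y, f x = g y -> x = u /\ y = v)] /\
    (forall z, (exists x, f x = z) \/ (exists y, g y = z)) /\
    edges K = [set f @: (e : {set vert G}) | e in edges G]
              :|: [set g @: (e : {set vert H}) | e in edges H].

(* series_of G t K : K is an iterated series composition
   (...((G 0 (+) G 1) (+) G 2) ... ) (+) G (t-1), with arbitrary glued vertices. *)
Inductive series_of (G : nat -> sgraph) : nat -> sgraph -> Prop :=
| series_one : series_of G 1 (G 0)
| series_step n K0 K : series_of G n.+1 K0 -> series_comp K0 (G n.+1) K ->
    series_of G n.+2 K.

From mathcomp Require Import all_boot all_order all_algebra zify.
Set Implicit Arguments. Unset Strict Implicit. Unset Printing Implicit Defensive.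
Import GRing.Theory Num.Theory.

(* If G and H have the same density p/q, in lowest terms, then |E(G)| = p a,
   |V(G)| - 1 = q a, |E(H)| = p b and |V(H)| - 1 = q b for some a, b.
   Interleave cyclic base orderings of G and H in blocks of a + b positions,
   a consecutive edges of G followed by b consecutive edges of H.  Any
   |V(G (+) H)| - 1 = q (a + b) cyclically consecutive positions then hold
   exactly q a consecutive edges of G and q b consecutive edges of H, i.e. two
   spanning trees, and their union is a spanning tree of G (+) H.  As G (+) H
   again has density p/q, induction on t concludes. *)

Section SlotCount.
Variables (lo w c : nat).
Hypotheses (w_gt0 : 0 < w) (slot_le : lo + w <= c).

Definition in_slot j := lo <= j %% c < lo + w.

(* The number of positions j' < j with [in_slot j']. *)
Definition slot_count j := j %/ c * w + minn (j %% c - lo) w.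

Let c_gt0 : 0 < c. Proof. lia. Qed.

Lemma slot_count0 : slot_count 0 = 0.
Proof. rewrite /slot_count div0n mod0n; lia. Qed.

Lemma slot_countS j : slot_count j.+1 = slot_count j + in_slot j.
Proof.
have jE : j.+1 = j %/ c * c + (j %% c).+1 by rewrite addnS -divn_eq.
rewrite /slot_count /in_slot jE.
case: (ltngtP (j %% c).+1 c) => [lt_jc | | eq_jc].
- rewrite divnMDl // modnMDl (divn_small lt_jc) (modn_small lt_jc) addn0.
  by case: (boolP (lo <= j %% c)); case: (boolP (j %% c < lo + w)) => /=; lia.
- by have := ltn_pmod j c_gt0; lia.
- rewrite eq_jc -mulSnr mulnK // modnMl.
  by case: (boolP (lo <= j %% c)); case: (boolP (j %% c < lo + w)) => /=; lia.
Qed.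

Lemma leq_slot_count : {homo slot_count : j k / j <= k}.
Proof.
move=> j k /subnKC <-; elim: (k - j) => [|n IH]; first by rewrite addn0.
rewrite addnS slot_countS; lia.
Qed.

Lemma slot_countDM j t : slot_count (j + t * c) = slot_count j + t * w.
Proof. rewrite /slot_count (addnC j) divnMDl // modnMDl; lia. Qed.

Lemma slot_count_onto y : exists2 j, in_slot j & slot_count j = y.
Proof.
have lt_yw := ltn_pmod y w_gt0.
have lt_c : lo + y %% w < c by lia.
exists (y %/ w * c + (lo + y %% w)).
  by rewrite /in_slot modnMDl (modn_small lt_c); lia.
rewrite /slot_count divnMDl // modnMDl (modn_small lt_c) (divn_small lt_c).
rewrite [in RHS](divn_eq y w); lia.
Qed.

Lemma slot_count_window i l y :
  slot_count i <= y < slot_count i + l * w <->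
  exists j, [/\ i <= j < i + l * c, in_slot j & slot_count j = y].
Proof.
split=> [/andP [lo_y y_hi] | [j [/andP [lo_j j_hi] in_j <-]]].
  have [j in_j jE] := slot_count_onto y.
  exists j; split=> //; apply/andP; split.
  - rewrite leqNgt; apply/negP => ltj.
    by have := leq_slot_count ltj; rewrite slot_countS in_j; lia.
  - rewrite ltnNge; apply/negP => lej.
    by have := leq_slot_count lej; rewrite slot_countDM; lia.
rewrite leq_slot_count //=.
by have := leq_slot_count j_hi; rewrite slot_countS in_j slot_countDM; lia.
Qed.

End SlotCount.

Section CyclicWindow.
Variables (T : finType) (x0 : T).

Definition cwindow (s : seq T) (i n : nat) : {set T} :=
  [set nth x0 s ((i + val k) %% size s) | k : 'I_n].

Lemma cwindowP s i n E :
  reflect (exists2 k, k < n & E = nth x0 s ((i + k) %% size s))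
          (E \in cwindow s i n).
Proof.
apply: (iffP imsetP) => [[k _ ->] | [k lt_kn ->]].
  by exists (val k); first exact: ltn_ord.
by exists (Ordinal lt_kn).
Qed.

Lemma cwindow_mod s i n : cwindow s (i %% size s) n = cwindow s i n.
Proof.
by apply/setP => E; apply/cwindowP/cwindowP => -[k lt_kn ->]; exists k;
  rewrite ?modnDml.
Qed.

Lemma cwindow_full s : cwindow s 0 (size s) = [set E in s].
Proof.
apply/setP => E; rewrite inE.
by apply/cwindowP/(nthP x0) => [[k lt_k ->] | [k lt_k <-]];
  exists k; rewrite // add0n modn_small.
Qed.

End CyclicWindow.

Lemma cwindow_map (T T' : finType) (x0 : T) (y0 : T') (h : T -> T') s i n :
  h x0 = y0 -> cwindow y0 (map h s) i n = h @: cwindow x0 s i n.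
Proof.
move=> <-.
have nth_h j : nth (h x0) (map h s) j = h (nth x0 s j).
  case: (ltnP j (size s)) => [lt_js | le_sj]; first exact: nth_map.
  by rewrite !nth_default ?size_map.
apply/setP => E; apply/cwindowP/imsetP; rewrite size_map.
  case=> k lt_kn ->; exists (nth x0 s ((i + k) %% size s)) => //.
  by apply/cwindowP; exists k.
by case=> F /cwindowP [k lt_kn ->] ->; exists k.
Qed.

Lemma windowE (G : sgraph) s i : window G s i = cwindow set0 s i (#|vert G| - 1).
Proof. by []. Qed.

Section Interleave.
Variables (T : finType) (x0 : T) (a b : nat) (s1 s2 : seq T).
Hypotheses (a_gt0 : 0 < a) (b_gt0 : 0 < b).
Local Notation c := (a + b).
Local Notation count1 := (slot_count 0 a c).
Local Notation count2 := (slot_count a b c).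

(* Each block of [a + b] consecutive positions takes the next [a] entries of
   [s1] followed by the next [b] entries of [s2], both read cyclically. *)
Definition interleave_at j :=
  if j %% c < a then nth x0 s1 (count1 j %% size s1)
  else nth x0 s2 (count2 j %% size s2).

Definition interleave := mkseq interleave_at (size s1 + size s2).

Let slot1 : 0 + a <= c. Proof. by rewrite add0n leq_addr. Qed.
Let slot2 : a + b <= c. Proof. by []. Qed.

Let in_slot1 j : in_slot 0 a c j = (j %% c < a).
Proof. by []. Qed.

Let in_slot2 j : in_slot a b c j = ~~ (j %% c < a).
Proof. by have := @ltn_pmod j c (ltn_addr _ a_gt0); rewrite /in_slot; lia. Qed.

Lemma interleave_at_window i l E :
  (exists2 k, k < l * c & E = interleave_at (i + k)) <->
  (exists2 k, k < l * a & E = nth x0 s1 ((count1 i + k) %% size s1)) \/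
  (exists2 k, k < l * b & E = nth x0 s2 ((count2 i + k) %% size s2)).
Proof.
split=> [[k lt_k ->] | ].
  rewrite /interleave_at; case: ifP => [in1 | /negbT in2].
    have /(slot_count_window a_gt0 slot1) /andP [lo hi] :
        exists j, [/\ i <= j < i + l * c, in_slot 0 a c j & count1 j = count1 (i + k)].
      by exists (i + k); split; rewrite ?in_slot1 //; lia.
    by left; exists (count1 (i + k) - count1 i); [lia | rewrite subnKC].
  have /(slot_count_window b_gt0 slot2) /andP [lo hi] :
      exists j, [/\ i <= j < i + l * c, in_slot a b c j & count2 j = count2 (i + k)].
    by exists (i + k); split; rewrite ?in_slot2 //; lia.
  by right; exists (count2 (i + k) - count2 i); [lia | rewrite subnKC].
case=> -[k lt_k ->].
  have /(slot_count_window a_gt0 slot1) [j [/andP [lo hi] in1 jE]] :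
      count1 i <= count1 i + k < count1 i + l * a by lia.
  by exists (j - i); [lia | rewrite subnKC // /interleave_at -in_slot1 in1 jE].
have /(slot_count_window b_gt0 slot2) [j [/andP [lo hi] in2 jE]] :
    count2 i <= count2 i + k < count2 i + l * b by lia.
exists (j - i); first lia.
by rewrite subnKC // /interleave_at -if_neg -in_slot2 in2 jE.
Qed.

Variable p : nat.
Hypotheses (p_gt0 : 0 < p) (size_s1 : size s1 = p * a) (size_s2 : size s2 = p * b).

Lemma size_interleave : size interleave = p * c.
Proof. by rewrite size_mkseq size_s1 size_s2 mulnDr. Qed.

Lemma interleave_atDM j t : interleave_at (j + t * (p * c)) = interleave_at j.
Proof.
rewrite /interleave_at mulnA.
rewrite (slot_countDM a_gt0 slot1) (slot_countDM b_gt0 slot2) -!mulnA size_s1 size_s2.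
by rewrite !(addnC _ (t * _)) !modnMDl [t * (p * c)]mulnA modnMDl.
Qed.

Lemma nth_interleave j : nth x0 interleave (j %% size interleave) = interleave_at j.
Proof.
have pc_gt0 : 0 < p * c by rewrite muln_gt0 p_gt0 addn_gt0 a_gt0.
rewrite size_interleave nth_mkseq; last by rewrite size_s1 size_s2 -mulnDr ltn_pmod.
by rewrite [in RHS](divn_eq j (p * c)) (addnC (_ * _)) interleave_atDM.
Qed.

Lemma cwindow_interleave i l :
  cwindow x0 interleave i (l * c) =
  cwindow x0 s1 (count1 i) (l * a) :|: cwindow x0 s2 (count2 i) (l * b).
Proof.
apply/setP => E; rewrite inE; apply/cwindowP/orP => [[k lt_k ->] | E_in].
  rewrite nth_interleave.
  have [] := (interleave_at_window i l (interleave_at (i + k))).1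
    (ex_intro2 _ _ k lt_k erefl).
    by case=> k' lt_k' ->; left; apply/cwindowP; exists k'.
  by case=> k' lt_k' ->; right; apply/cwindowP; exists k'.
have [k lt_k ->] : exists2 k, k < l * c & E = interleave_at (i + k).
  by apply/interleave_at_window; case: E_in => /cwindowP; [left | right].
by exists k; rewrite ?nth_interleave.
Qed.

Lemma perm_interleave : uniq (s1 ++ s2) -> perm_eq interleave (s1 ++ s2).
Proof.
have mem_interleave : interleave =i s1 ++ s2.
  move=> E; have mem_cwindow (s : seq T) : (E \in s) = (E \in cwindow x0 s 0 (size s)).
    by rewrite cwindow_full inE.
  rewrite mem_cat !mem_cwindow size_s1 size_s2 size_interleave cwindow_interleave.
  by rewrite !slot_count0 // inE.
move=> uniq_s12; apply: uniq_perm => //.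
apply: leq_size_uniq uniq_s12 _ _ => [E|]; first by rewrite mem_interleave.
by rewrite size_cat size_mkseq.
Qed.

End Interleave.

Lemma connect_homo (T T' : finType) (e : rel T) (e' : rel T') (h : T -> T') :
  (forall x y, e x y -> connect e' (h x) (h y)) ->
  forall x y, connect e x y -> connect e' (h x) (h y).
Proof.
move=> he x y /connectP [q]; elim: q x => [|z q IH] x /=; first by move=> _ ->.
by case/andP=> /he hxz /IH hzy /hzy; apply: connect_trans hxz.
Qed.

Lemma connectedF_edges_gt0 (V : finType) (E : {set {set V}}) :
  1 < #|V| -> connectedF E -> 0 < #|E|.
Proof.
move=> /card_gt1P [x [y [_ _ neq_xy]]] /(_ x y) /connectP [[|z q] /=].
  by move=> _ yx; rewrite yx eqxx in neq_xy.
by case/andP=> xz _ _; apply/card_gt0P; exists [set x; z].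
Qed.

Definition imgE (V W : finType) (f : V -> W) (A : {set {set V}}) : {set {set W}} :=
  [set f @: (e : {set V}) | e in A].

Lemma imset_set2 (V W : finType) (f : V -> W) x y : f @: [set x; y] = [set f x; f y].
Proof. by rewrite imsetU1 imset_set1. Qed.

Lemma adjF_imgE (V W : finType) (f : V -> W) (A : {set {set V}}) x y :
  adjF A x y -> adjF (imgE f A) (f x) (f y).
Proof. by move=> Axy; rewrite /adjF -imset_set2; apply: imset_f. Qed.

Lemma connectF_imgE (V W : finType) (f : V -> W) (A : {set {set V}}) (C : {set {set W}}) :
  imgE f A \subset C -> forall x y, connect (adjF A) x y -> connect (adjF C) (f x) (f y).
Proof.
move=> /subsetP sAC; apply: connect_homo => x y /(adjF_imgE f) /sAC Cfxy.
exact: connect1.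
Qed.

Section GluedImages.
Variables (V1 V2 W : finType) (f : V1 -> W) (g : V2 -> W) (u : V1) (v : V2).
Hypotheses (f_inj : injective f) (fg_glue : forall x y, f x = g y -> x = u).

Definition retract (z : W) : V1 := if [pick x | f x == z] is Some x then x else u.

Lemma retract_f x : retract (f x) = x.
Proof.
by rewrite /retract; case: pickP => [x' /eqP /f_inj // | /(_ x)]; rewrite eqxx.
Qed.

Lemma retract_g y : retract (g y) = u.
Proof. by rewrite /retract; case: pickP => [x' /eqP /fg_glue | ]. Qed.

(* Retracting [W] onto [V1] collapses the image of [g] to [u]: an edge of
   the union other than [f @: e0] becomes an edge of [A :\ e0] or a loop. *)
Lemma disconnected_imgE_union (A : {set {set V1}}) (B : {set {set V2}}) e0 :
  ~ connectedF (A :\ e0) -> ~ connectedF ((imgE f A :|: imgE g B) :\ f @: e0).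
Proof.
move=> disconnA connU; apply: disconnA => x y.
rewrite -(retract_f x) -(retract_f y); apply: connect_homo (connU (f x) (f y)) => z w.
rewrite /adjF => /setD1P [neq_e0 /setUP [] /imsetP [e1 e1_in e1E]].
  have /imsetP [x1 _ zE] : z \in f @: e1 by rewrite -e1E !inE eqxx.
  have /imsetP [y1 _ wE] : w \in f @: e1 by rewrite -e1E !inE eqxx orbT.
  subst z w; have {}e1E : e1 = [set x1; y1].
    by apply: (imset_inj f_inj); rewrite imset_set2 -e1E.
  rewrite !retract_f; apply: connect1; apply/setD1P; split; last by rewrite -e1E.
  by apply: contra neq_e0 => /eqP <-; rewrite imset_set2.
have /imsetP [x1 _ ->] : z \in g @: e1 by rewrite -e1E !inE eqxx.
have /imsetP [y1 _ ->] : w \in g @: e1 by rewrite -e1E !inE eqxx orbT.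
by rewrite !retract_g connect0.
Qed.

Hypotheses (fu_gv : f u = g v)
  (fg_cover : forall z, (exists x, f x = z) \/ (exists y, g y = z)).

Lemma connected_imgE_union (A : {set {set V1}}) (B : {set {set V2}}) :
  connectedF A -> connectedF B -> connectedF (imgE f A :|: imgE g B).
Proof.
move=> connA connB.
have connf x x' : connect (adjF (imgE f A :|: imgE g B)) (f x) (f x').
  by apply: connectF_imgE (connA x x'); apply: subsetUl.
have conng y y' : connect (adjF (imgE f A :|: imgE g B)) (g y) (g y').
  by apply: connectF_imgE (connB y y'); apply: subsetUr.
move=> z w; apply: (@connect_trans _ _ (f u)).
  case: (fg_cover z) => [[x <-] | [y <-]]; first exact: connf.
  by rewrite fu_gv; apply: conng.
case: (fg_cover w) => [[x <-] | [y <-]]; first exact: connf.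
by rewrite fu_gv; apply: conng.
Qed.

End GluedImages.

Section Mediant.
Local Open Scope ring_scope.

Lemma mediant_eq (R : numFieldType) (m n m' n' : R) :
  0 < n -> 0 < n' -> m / n = m' / n' -> (m + m') / (n + n') = m / n.
Proof.
move=> n_gt0 n'_gt0 mn; set r := m / n.
have mE : m = r * n by rewrite /r mulfVK ?lt0r_neq0.
have m'E : m' = r * n' by rewrite /r mn mulfVK ?lt0r_neq0.
by rewrite {1}mE m'E -mulrDr mulfK // lt0r_neq0 ?addr_gt0.
Qed.

End Mediant.

Lemma density_cross (G H : sgraph) : 1 < #|vert G| -> 1 < #|vert H| ->
  density G = density H ->
  #|edges G| * (#|vert H| - 1) = #|edges H| * (#|vert G| - 1).
Proof.
move=> vG vH /eqP; rewrite /density eqr_div ?pnatr_eq0 -?lt0n ?subn_gt0 //.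
by rewrite -!natrM eqr_nat => /eqP.
Qed.

(* [p / q] is the common ratio in lowest terms. *)
Lemma proportion_factor m n m' n' : 0 < n -> 0 < n' -> m * n' = m' * n ->
  exists p q a b, [/\ 0 < a, 0 < b, m = p * a, n = q * a & m' = p * b /\ n' = q * b].
Proof.
move=> n_gt0 n'_gt0 cross.
set a := gcdn m n; set p := m %/ a; set q := n %/ a.
have a_gt0 : 0 < a by rewrite gcdn_gt0 n_gt0 orbT.
have mE : m = p * a by rewrite divnK // dvdn_gcdl.
have nE : n = q * a by rewrite divnK // dvdn_gcdr.
have q_gt0 : 0 < q by move: n_gt0; rewrite nE muln_gt0 => /andP [].
have coprime_qp : coprime q p.
  by rewrite /coprime gcdnC -(eqn_pmul2r a_gt0) mul1n muln_gcdl -mE -nE.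
have pq_cross : p * n' = m' * q.
  by apply/eqP; rewrite -(eqn_pmul2r a_gt0) mulnAC -mE cross nE mulnA.
have /dvdnP [b n'E] : q %| n'.
  by rewrite -(Gauss_dvdr _ coprime_qp) pq_cross dvdn_mull.
exists p, q, a, b; split=> //.
- by move: n'_gt0; rewrite n'E muln_gt0 => /andP [].
split; last by rewrite n'E mulnC.
by apply/eqP; rewrite -(eqn_pmul2r q_gt0) -pq_cross n'E mulnA.
Qed.

Section SeriesComposition.
Variables (G H K : sgraph) (f : vert G -> vert K) (g : vert H -> vert K).
Variables (u : vert G) (v : vert H).
Hypotheses (f_inj : injective f) (g_inj : injective g) (fu_gv : f u = g v)
  (fg_glue : forall x y, f x = g y -> x = u /\ y = v)
  (fg_cover : forall z, (exists x, f x = z) \/ (exists y, g y = z))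
  (edgesK : edges K = imgE f (edges G) :|: imgE g (edges H)).

Let f_glue x y : f x = g y -> x = u. Proof. by case/fg_glue. Qed.
Let g_glue y x : g y = f x -> y = v. Proof. by move/esym/fg_glue=> []. Qed.

Lemma card_vert_series : #|vert K| = #|vert G| + #|vert H| - 1.
Proof.
have imfg : f @: [set: vert G] :|: g @: [set: vert H] = [set: vert K].
  apply/setP => z; rewrite !inE; apply/orP.
  by case: (fg_cover z) => [[x <-] | [y <-]]; [left | right]; apply: imset_f.
have imfIg : f @: [set: vert G] :&: g @: [set: vert H] = [set f u].
  apply/setP => z; rewrite !inE; apply/andP/eqP => [[/imsetP [x _ ->]] | ->].
    by case/imsetP=> y _ /f_glue ->.
  by split; [rewrite imset_f | rewrite fu_gv imset_f].
by rewrite -cardsT -imfg cardsU imfIg cards1 !card_imset // !cardsT.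
Qed.

Lemma imset_edges_neq (e1 : {set vert G}) (e2 : {set vert H}) :
  e1 \in edges G -> f @: e1 != g @: e2.
Proof.
move=> e1_in; apply/eqP => e12.
have : #|f @: e1| = 2 by rewrite card_imset //; apply/eqP/(forall_inP (edges2 G)).
suff /subset_leq_card : f @: e1 \subset [set f u] by rewrite cards1 => /[swap] ->.
apply/subsetP => z z_in; rewrite inE.
move: (z_in); rewrite e12 => /imsetP [y _ zE].
by case/imsetP: z_in => x _ xE; rewrite xE (f_glue (etrans (esym xE) zE)).
Qed.

Lemma perm_edges_series sG sH :
  perm_eq sG (enum (edges G)) -> perm_eq sH (enum (edges H)) ->
  perm_eq (map (fun e : {set _} => f @: e) sG ++ map (fun e : {set _} => g @: e) sH)
          (enum (edges K)).
Proof.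
move=> permG permH; apply: uniq_perm; rewrite ?enum_uniq //.
rewrite cat_uniq; apply/and3P; split.
- by rewrite (map_inj_uniq (imset_inj f_inj)) (perm_uniq permG) enum_uniq.
- rewrite has_map; apply/hasPn => e2 _ /=; apply/mapP => -[e1].
  by rewrite (perm_mem permG) mem_enum => /(imset_edges_neq e2) /eqP neq /esym /neq.
- by rewrite (map_inj_uniq (imset_inj g_inj)) (perm_uniq permH) enum_uniq.
move=> E; rewrite mem_enum edgesK mem_cat; apply/orP/setUP.
  by case=> /mapP [e]; rewrite ?(perm_mem permG) ?(perm_mem permH) mem_enum => e_in ->;
    [left | right]; apply: imset_f.
by case=> /imsetP [e]; rewrite -mem_enum -?(perm_mem permG) -?(perm_mem permH) => e_in ->;
  [left | right]; apply: map_f.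
Qed.

Lemma card_edges_series : #|edges K| = #|edges G| + #|edges H|.
Proof.
rewrite !cardE -(perm_size (perm_edges_series (perm_refl _) (perm_refl _))).
by rewrite size_cat !size_map.
Qed.

Lemma spanning_tree_union A B :
  spanning_tree G A -> spanning_tree H B -> spanning_tree K (imgE f A :|: imgE g B).
Proof.
move=> [subA [connA minA]] [subB [connB minB]]; split; last split.
- by rewrite edgesK setUSS ?imsetS.
- exact: (connected_imgE_union fu_gv fg_cover connA connB).
move=> e /setUP [] /imsetP [e0 e0_in ->].
  exact: disconnected_imgE_union f_inj f_glue _ _ _ (minA e0 e0_in).
rewrite setUC; exact: disconnected_imgE_union g_inj g_glue _ _ _ (minB e0 e0_in).
Qed.

Lemma interleave_CBO sG sH p q a b :
  0 < a -> 0 < b -> 0 < p -> is_CBO G sG -> is_CBO H sH ->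
  #|edges G| = p * a -> #|edges H| = p * b ->
  #|vert G| - 1 = q * a -> #|vert H| - 1 = q * b ->
  is_CBO K (interleave set0 a b (map (fun e : {set _} => f @: e) sG)
                                (map (fun e : {set _} => g @: e) sH)).
Proof.
move=> a_gt0 b_gt0 p_gt0 [permG treeG] [permH treeH] mG mH nG nH.
have sizeG : size sG = p * a by rewrite (perm_size permG) -cardE.
have sizeH : size sH = p * b by rewrite (perm_size permH) -cardE.
have permK := perm_edges_series permG permH.
split=> [|i _].
  apply: (perm_trans _ permK); apply: (perm_interleave _ a_gt0 b_gt0 p_gt0).
  - by rewrite size_map.
  - by rewrite size_map.
  - by rewrite (perm_uniq permK) enum_uniq.
have nK : #|vert K| - 1 = q * (a + b).
  have : 0 < #|vert G| by apply/card_gt0P; exists u.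
  have : 0 < #|vert H| by apply/card_gt0P; exists v.
  by rewrite card_vert_series mulnDr; lia.
rewrite windowE nK (cwindow_interleave _ a_gt0 b_gt0 p_gt0) ?size_map //.
rewrite !(cwindow_map _ _ _ (imset0 _)) -nG -nH -!windowE.
apply: spanning_tree_union; rewrite windowE -cwindow_mod -windowE.
  by apply: treeG; rewrite ltn_pmod // sizeG muln_gt0 p_gt0.
by apply: treeH; rewrite ltn_pmod // sizeH muln_gt0 p_gt0.
Qed.

Lemma density_series : 1 < #|vert G| -> 1 < #|vert H| ->
  density G = density H -> density K = density G.
Proof.
move=> vG vH dGH; rewrite /density card_edges_series card_vert_series.
have -> : #|vert G| + #|vert H| - 1 - 1 = (#|vert G| - 1) + (#|vert H| - 1) by lia.
by rewrite !natrD; apply: mediant_eq; rewrite ?ltr0n ?subn_gt0.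
Qed.

End SeriesComposition.

Lemma series_comp_orderable (G H K : sgraph) :
  series_comp G H K -> 1 < #|vert G| -> 1 < #|vert H| ->
  cyclically_orderable G -> cyclically_orderable H -> density G = density H ->
  [/\ cyclically_orderable K, 1 < #|vert K| & density K = density G].
Proof.
move=> [u [v [f [g [[f_inj g_inj fu_gv fg_glue] [fg_cover edgesK]]]]]] vG vH
  [connG [sG cboG]] [connH [sH cboH]] dGH.
have nG_gt0 : 0 < #|vert G| - 1 by rewrite subn_gt0.
have nH_gt0 : 0 < #|vert H| - 1 by rewrite subn_gt0.
have [p [q [a [b [a_gt0 b_gt0 mG nG [mH nH]]]]]] :=
  proportion_factor nG_gt0 nH_gt0 (density_cross vG vH dGH).
have p_gt0 : 0 < p.
  by move: (connectedF_edges_gt0 vG connG); rewrite mG muln_gt0 => /andP [].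
split.
- split.
    rewrite /connected_graph edgesK.
    exact: (connected_imgE_union fu_gv fg_cover connG connH).
  by eexists; apply: (interleave_CBO f_inj g_inj fu_gv fg_glue fg_cover edgesK
    a_gt0 b_gt0 p_gt0 cboG cboH mG mH nG nH).
- by rewrite (card_vert_series f_inj g_inj fu_gv fg_glue fg_cover); lia.
- exact: (density_series f_inj g_inj fu_gv fg_glue fg_cover edgesK vG vH dGH).
Qed.

Theorem mainTheorem7 (t : nat) (G : nat -> sgraph) (K : sgraph) :
  2 <= t ->
  (forall i, i < t -> 2 <= #|vert (G i)|) ->
  (forall i, i < t -> cyclically_orderable (G i)) ->
  (forall i j, i < t -> j < t -> density (G i) = density (G j)) ->
  series_of G t K ->
  cyclically_orderable K.
Proof.
move=> _ vG orderG dG seriesK.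
suff : forall n K, series_of G n K -> n <= t ->
    [/\ cyclically_orderable K, 1 < #|vert K| & density K = density (G 0)].
  by move=> /(_ t K seriesK (leqnn t)) [].
move=> n K0; elim=> [t_gt0 | m K1 K2 _ IH comp12 lt_m1t].
  by split; [apply: orderG | apply: vG |].
have t_gt0 : 0 < t by apply: leq_trans lt_m1t.
have [order1 v1 d1] := IH (ltnW lt_m1t).
have [order2 v2 d2] := series_comp_orderable comp12 v1 (vG _ lt_m1t) order1
  (orderG _ lt_m1t) (etrans d1 (dG 0 m.+1 t_gt0 lt_m1t)).
by split=> //; rewrite d2 d1.
Qed.
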